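(* Let $m \geq 2$ be an integer. Let $P_m(z) \in \mathbb{Z}[[z]]$ be the unique formal power series with constant term $1$ satisfying $$P_m = 1 + z\,(P_m)^{(m-1)^2}.$$ Define the integers $\alpha_n$ ($n \geq 1$) by the formal product factorization $$P_m(z) = \prod_{n=1}^{\infty} \bigl(1 - (-1)^{mn} z^n\bigr)^{\alpha_n},$$ and set $\Omega(n\gamma_c) := \dfrac{m\,\alpha_n}{n}$. Then for every $n \geq 1$, $$\Omega(n \gamma_{c}) = \frac{m}{(m-1)^2 n^2}\sum_{d\mid n} (-1)^{m d + 1}\, \mu\!\left(\frac{n}{d} \right) \binom{(m-1)^2 d}{d},$$ where $\mu$ is the Möbius function.
   Context: In the paper, $\Omega(n\gamma_c)$ denotes the BPS index (second helicity supertrace) of the charge $n\gamma_c$ for a four-dimensional $\mathcal{N}=2$ theory whose spectral network at the critical phase is an ''$m$-herd''; the paper shows that the street factor generating function $P_m$ of such a network satisfies the displayed algebraic equation and that $\Omega(n\gamma_c) = m\alpha_n/n$ with $\alpha_n$ the exponents of the displayed factorization. The product factorization is a formal one: the exponents $\alpha_n$ are uniquely determined by comparing coefficients of $\log P_m$ order by order in $z$. *)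

From mathcomp Require Import all_boot all_order all_algebra.
Set Implicit Arguments. Unset Strict Implicit. Unset Printing Implicit Defensive.
Import Order.TTheory GRing.Theory Num.Theory.
Local Open Scope ring_scope.

(* A formal power series: its coefficient sequence ([z^j] f = f j). *)
Definition fps := nat -> rat.

Definition fps_one : fps := fun j => if j == 0%N then 1 else 0.
Definition fps_z (f : fps) : fps := fun j => if j is j'.+1 then f j' else 0.
Definition fps_add (f g : fps) : fps := fun j => f j + g j.
Definition fps_mul (f g : fps) : fps :=
  fun j => \sum_(i < j.+1) f i * g (j - i)%N.
Definition fps_pow (f : fps) (k : nat) : fps := iter k (fps_mul f) fps_one.

Definition gbinom (a : rat) (k : nat) : rat :=
  (\prod_(i < k) (a - i%:R)) / (k`!)%:R.

(* (1 - s z^n)^a  (n >= 1) as a formal power series, via the binomial series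
   sum_k binom(a,k) (-s z^n)^k *)
Definition fps_binpow (n : nat) (s a : rat) : fps :=
  fun j => if (n %| j)%N then gbinom a (j %/ n) * (- s) ^+ (j %/ n) else 0.

(* Formal infinite product  prod_{n>=1} F n, for factors with F n = 1 + O(z^n):
   the coefficient of z^j is that of the finite product over 1 <= n <= j. *)
Definition fps_infprod (F : nat -> fps) : fps :=
  fun j => (\big[fps_mul/fps_one]_(1 <= n < j.+1) F n) j.

Definition moebius (n : nat) : int :=
  if (0 < n)%N && all (fun p => logn p n == 1%N) (primes n)
  then (-1) ^+ size (primes n) else 0.

(* Write theta = z d/dz.  Each factor F_n = (1 - s_n z^n)^(alpha_n) satisfies
   theta F_n = F_n G_n with G_n = -n alpha_n sum_(k>=1) s_n^k z^(nk), so the product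
   of the F_n has logarithmic theta-derivative sum_n G_n, whose z^N coefficient is
   (-1)^(mN+1) sum_(d | N) d alpha_d when s_n = (-1)^(mn).  On the other side the
   binomial series B_r = sum_n C(kn+r, n) z^n satisfy B_r = P^r B_0 (Pascal's rule
   and P = 1 + z P^k), which yields theta P = P c with c_N = C(kN, N) / k.  Since a
   series with constant term 1 is determined by its logarithmic theta-derivative,
   P equals the product exactly when sum_(d | N) d alpha_d = (-1)^(mN+1) c_N for all
   N >= 1, and Moebius inversion solves these equations for alpha. *)

From HB Require Import structures.
From mathcomp Require Import all_boot all_order all_algebra.
From mathcomp Require Import boolp ring zify.
Set Implicit Arguments. Unset Strict Implicit. Unset Printing Implicit Defensive.
Import Order.TTheory GRing.Theory Num.Theory.
Local Open Scope ring_scope.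

(** * The ring of formal power series *)

HB.instance Definition _ := gen_eqMixin fps.
HB.instance Definition _ := gen_choiceMixin fps.

Definition fps_zero : fps := fun=> 0.
Definition fps_opp (f : fps) : fps := fun j => - f j.

Lemma fps_addA : associative fps_add.
Proof. by move=> f g h; apply: funext => j; rewrite /fps_add addrA. Qed.

Lemma fps_addC : commutative fps_add.
Proof. by move=> f g; apply: funext => j; rewrite /fps_add addrC. Qed.

Lemma fps_add0 : left_id fps_zero fps_add.
Proof. by move=> f; apply: funext => j; rewrite /fps_add add0r. Qed.

Lemma fps_addN : left_inverse fps_zero fps_opp fps_add.
Proof. by move=> f; apply: funext => j; rewrite /fps_add addNr. Qed.

HB.instance Definition _ :=
  GRing.isZmodule.Build fps fps_addA fps_addC fps_add0 fps_addN.

(* The ring axioms are transported from {poly rat} through truncation. *)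
Definition fps_trunc (N : nat) (f : fps) : {poly rat} := \poly_(i < N) f i.

Lemma coef_fps_mul_trunc f g N j :
  (j < N)%N -> fps_mul f g j = (fps_trunc N f * fps_trunc N g)`_j.
Proof.
move=> ltjN; rewrite coefM; apply: eq_bigr => i _.
have ltiN : (i < N)%N by apply: leq_ltn_trans ltjN; rewrite -ltnS.
have ltjiN : (j - i < N)%N by apply: leq_ltn_trans ltjN; rewrite leq_subr.
by rewrite !coef_poly ltiN ltjiN.
Qed.

Lemma coefMl_eq (p p' q : {poly rat}) j :
  (forall i, (i <= j)%N -> p`_i = p'`_i) -> (p * q)`_j = (p' * q)`_j.
Proof.
by move=> eq_pp'; rewrite !coefM; apply: eq_bigr => i _; rewrite eq_pp' // -ltnS.
Qed.

Lemma fps_mulA : associative fps_mul.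
Proof.
move=> f g h; apply: funext => j.
have trunc_mul f1 f2 i : (i <= j)%N ->
    (fps_trunc j.+1 (fps_mul f1 f2))`_i = (fps_trunc j.+1 f1 * fps_trunc j.+1 f2)`_i.
  by move=> leij; rewrite coef_poly ltnS leij; apply: coef_fps_mul_trunc.
rewrite !(coef_fps_mul_trunc _ _ (ltnSn j)) (coefMl_eq _ (trunc_mul f g)).
by rewrite !(mulrC (fps_trunc _ f)) (coefMl_eq _ (trunc_mul g h)) mulrAC.
Qed.

Lemma fps_mulC : commutative fps_mul.
Proof.
by move=> f g; apply: funext => j; rewrite !(coef_fps_mul_trunc _ _ (ltnSn j)) mulrC.
Qed.

Lemma fps_mul1 : left_id fps_one fps_mul.
Proof.
move=> f; apply: funext => j; rewrite /fps_mul big_ord_recl /fps_one /= mul1r subn0.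
by rewrite big1 ?addr0 // => i _; rewrite mul0r.
Qed.

Lemma fps_mulDl : left_distributive fps_mul fps_add.
Proof.
move=> f g h; apply: funext => j; rewrite /fps_add /fps_mul -big_split /=.
by apply: eq_bigr => i _; rewrite mulrDl.
Qed.

Lemma fps_one_neq0 : fps_one != 0.
Proof. by apply/eqP => /(congr1 (fun f : fps => f 0%N)) /eqP; rewrite oner_eq0. Qed.

HB.instance Definition _ := GRing.Zmodule_isComNzRing.Build fps
  fps_mulA fps_mulC fps_mul1 fps_mulDl fps_one_neq0.

Lemma coef_fpsD (f g : fps) j : (f + g) j = f j + g j. Proof. by []. Qed.
Lemma coef_fpsB (f g : fps) j : (f - g) j = f j - g j. Proof. by []. Qed.
Lemma coef_fpsM (f g : fps) j : (f * g) j = \sum_(i < j.+1) f i * g (j - i)%N.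
Proof. by []. Qed.
Lemma coef_fps1 j : (1 : fps) j = (j == 0%N)%:R.
Proof. by case: j. Qed.

Lemma coef_fps_sum (I : Type) (r : seq I) (P : pred I) (F : I -> fps) j :
  (\sum_(i <- r | P i) F i) j = \sum_(i <- r | P i) F i j.
Proof.
elim: r => [|x r IH]; first by rewrite !big_nil.
by rewrite !big_cons; case: (P x); rewrite ?coef_fpsD IH.
Qed.

Lemma coef_fpsM0 (f g : fps) : (f * g) 0%N = f 0%N * g 0%N.
Proof. by rewrite coef_fpsM big_ord1. Qed.

Definition fpsC (c : rat) : fps := fun j => if j == 0%N then c else 0.

Lemma coef_fpsCM c (f : fps) j : (fpsC c * f) j = c * f j.
Proof.
rewrite coef_fpsM big_ord_recl /= subn0 big1 ?addr0 // => i _.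
by rewrite /fpsC /= mul0r.
Qed.

Lemma fpsC_nat n : (n%:R : fps) = fpsC n%:R.
Proof.
elim: n => [|n IH]; first by apply: funext => -[].
by rewrite -addn1 !natrD IH; apply: funext => -[|j]; rewrite coef_fpsD /fpsC ?addr0.
Qed.

Lemma coef_fps_natM n (f : fps) j : (n%:R * f) j = n%:R * f j.
Proof. by rewrite fpsC_nat coef_fpsCM. Qed.

Lemma coef_fps_nat0 n : (n%:R : fps) 0%N = n%:R.
Proof. by rewrite fpsC_nat. Qed.

Definition fpsX : fps := fun j => (j == 1%N)%:R.

Lemma coef_fpsXM (f : fps) j : (fpsX * f) j = if j is j'.+1 then f j' else 0.
Proof.
rewrite coef_fpsM big_ord_recl /= mul0r add0r.
case: j => [|j]; first by rewrite big_ord0.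
rewrite big_ord_recl /= mul1r subSS subn0 big1 ?addr0 // => i _.
by rewrite /bump /= mul0r.
Qed.

Lemma coef_fpsXnM n (f : fps) j :
  (fpsX ^+ n * f) j = if (n <= j)%N then f (j - n)%N else 0.
Proof.
elim: n j => [|n IH] j; first by rewrite expr0 mul1r subn0.
by rewrite exprS -mulrA coef_fpsXM; case: j => [|j] //; rewrite IH ltnS subSS.
Qed.

Lemma fps_zE (f : fps) : fps_z f = fpsX * f.
Proof. by apply: funext => j; rewrite coef_fpsXM; case: j. Qed.

Lemma fps_powE (f : fps) k : fps_pow f k = f ^+ k.
Proof. by elim: k => [|k IH] //; rewrite exprS -IH. Qed.

Lemma fps_mulIl (X A B : fps) : X 0%N != 0 -> X * A = X * B -> A = B.
Proof.
move=> X0 eqXAB; apply: funext => j; elim/ltn_ind: j => j IH.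
have := congr1 (fun f : fps => f j) eqXAB; rewrite !coef_fpsM !big_ord_recl /= !subn0.
rewrite (eq_bigr (fun i : 'I_j => X (bump 0 i) * B (j - bump 0 i)%N)); last first.
  move=> i _; rewrite IH // /bump /=; case: j i IH {eqXAB} => [[]//|j] i _.
  by rewrite add1n subSS ltnS leq_subr.
by move/addIr/(mulfI X0).
Qed.

(** * The Euler operator z d/dz *)

Definition theta (f : fps) : fps := fun j => j%:R * f j.

Lemma thetaM (f g : fps) : theta (f * g) = theta f * g + f * theta g.
Proof.
apply: funext => j; rewrite /theta coef_fpsD !coef_fpsM mulr_sumr -big_split /=.
by apply: eq_bigr => i _; rewrite natrB; [ring | rewrite -ltnS].
Qed.

Lemma thetaD (f g : fps) : theta (f + g) = theta f + theta g.
Proof. by apply: funext => j; rewrite /theta !coef_fpsD mulrDr. Qed.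

Lemma theta1 : theta 1 = 0.
Proof. by apply: funext => -[|j]; rewrite /theta ?mul0r ?mulr0. Qed.

Lemma thetaX : theta fpsX = fpsX.
Proof.
apply: funext => j; rewrite /theta /fpsX.
by case: (j =P 1%N) => [->|]; rewrite ?mulr1 ?mulr0.
Qed.

Lemma thetaXn (f : fps) n : theta (f ^+ n.+1) = n.+1%:R * f ^+ n * theta f.
Proof.
elim: n => [|n IH]; first by rewrite expr1 expr0 mulr1 mul1r.
by rewrite exprS thetaM IH !exprS; ring.
Qed.

Lemma logder_coef0 (X G : fps) : X 0%N = 1 -> theta X = X * G -> G 0%N = 0.
Proof.
by move=> X0 /(congr1 (fun f : fps => f 0%N)); rewrite coef_fpsM0 X0 mul1r /theta mul0r.
Qed.

Lemma theta_logder_inj (X Y G : fps) : X 0%N = 1 -> Y 0%N = 1 ->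
  theta X = X * G -> theta Y = Y * G -> X = Y.
Proof.
move=> X0 Y0 thX thY; have G0 := logder_coef0 X0 thX.
apply: funext => j; elim/ltn_ind: j => -[|j] IH; first by rewrite X0 Y0.
have coef_theta Z : theta Z = Z * G ->
    j.+1%:R * Z j.+1 = \sum_(i < j.+1) Z i * G (j.+1 - i)%N.
  move/(congr1 (fun f : fps => f j.+1)).
  by rewrite /theta coef_fpsM big_ord_recr /= subnn G0 mulr0 addr0.
have := coef_theta X thX; under eq_bigr => i _ do rewrite IH //.
by rewrite -(coef_theta Y thY) => /(mulfI _) -> //; rewrite pnatr_eq0.
Qed.

Section LogderP.

Variable k' : nat.
Let k := k'.+1.
Variable P : fps.
Hypothesis P0 : P 0%N = 1.
Hypothesis P_eq : P = 1 + fpsX * P ^+ k.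

Definition binom_series (r : nat) : fps := fun n => ('C(k * n + r, n))%:R.

Lemma binom_series_pow r : P ^+ r * binom_series 0 = binom_series r.
Proof.
have P_powS i : P ^+ i.+1 = P ^+ i + fpsX * P ^+ (i + k).
  by rewrite exprS {1}P_eq exprD; ring.
apply: funext => n; elim/ltn_ind: n r => n IHn.
elim=> [|r IHr]; first by rewrite expr0 mul1r.
rewrite P_powS mulrDl -mulrA coef_fpsD coef_fpsXM IHr {IHr}.
case: n IHn => [|n] IHn; first by rewrite /binom_series !muln0 !add0n !bin0 addr0.
rewrite IHn // /binom_series -natrD addnS binS; congr (_ + _)%:R.
by congr 'C(_, _); rewrite mulnS; lia.
Qed.

Definition binom_series_pred : fps := fun n => ('C(k * n - 1, n))%:R.

Lemma binom_series0_split :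
  binom_series 0 = binom_series_pred + fpsX * binom_series k'.
Proof.
apply: funext => n; rewrite coef_fpsD coef_fpsXM /binom_series /binom_series_pred.
case: n => [|n].
  by rewrite !muln0 bin0 addr0.
have -> : (k * n.+1 - 1 = k * n + k')%N by rewrite /k; lia.
have -> : (k * n.+1 + 0 = (k * n + k').+1)%N by rewrite /k; lia.
by rewrite binS -natrD.
Qed.

Lemma binom_series_predE : k%:R * binom_series_pred = 1 + k'%:R * binom_series 0.
Proof.
apply: funext => n; rewrite coef_fpsD !coef_fps_natM coef_fps1.
rewrite /binom_series /binom_series_pred; case: n => [|n].
  by rewrite muln0 bin0 /= !mulr1 /k -addn1 natrD addrC.
rewrite add0r addn0 -!natrM; congr _%:R.
apply/eqP; rewrite -(eqn_pmul2l (ltn0Sn n)); apply/eqP.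
rewrite subn1 mulnA (mulnC n.+1) mul_bin_down mulnA; congr (_ * _)%N; rewrite /k; lia.
Qed.

Lemma binom_series0_mul : binom_series 0 * (k%:R - k'%:R * P) = P.
Proof.
have P_rec : fpsX * P ^+ k - P + 1 = 0 by rewrite {2}P_eq; ring.
have B0_rec :
    binom_series 0 - binom_series_pred - fpsX * P ^+ k' * binom_series 0 = 0.
  by rewrite {1}binom_series0_split -binom_series_pow; ring.
have Bpred_rec : k%:R * binom_series_pred - 1 - k'%:R * binom_series 0 = 0.
  by rewrite binom_series_predE; ring.
apply/eqP; rewrite -subr_eq0; apply/eqP.
transitivity
  (k%:R * P * (binom_series 0 - binom_series_pred - fpsX * P ^+ k' * binom_series 0)
   + k%:R * binom_series 0 * (fpsX * P ^+ k - P + 1)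
   + P * (k%:R * binom_series_pred - 1 - k'%:R * binom_series 0)).
  by rewrite /k exprS; ring.
by rewrite P_rec B0_rec Bpred_rec; ring.
Qed.

Definition logder_P : fps :=
  fun N => if N == 0%N then 0 else ('C(k * N, N))%:R / k%:R.

Lemma logder_P_mul : logder_P * (k%:R - k'%:R * P) = P - 1.
Proof.
apply: (@fps_mulIl k%:R); first by rewrite coef_fps_nat0 pnatr_eq0.
have B0E : binom_series 0 = 1 + k%:R * logder_P.
  apply: funext => n; rewrite coef_fpsD coef_fps_natM coef_fps1 /binom_series.
  case: n => [|n].
    by rewrite muln0 bin0 mulr0 addr0.
  by rewrite add0r addn0 mulrC divfK // pnatr_eq0.
have := binom_series0_mul; rewrite B0E mulrDl mul1r => B0_eq.
rewrite mulrA; apply: (addrI (k%:R - k'%:R * P)); rewrite B0_eq.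
by rewrite /k -addn1 natrD; ring.
Qed.

Lemma theta_P : theta P = P * logder_P.
Proof.
have U0 : (k%:R - k'%:R * P) 0%N != 0.
  rewrite coef_fpsB coef_fps_natM !coef_fps_nat0 P0 mulr1 /k -addn1 natrD addrC addKr.
  by rewrite oner_eq0.
have P_rec : fpsX * P ^+ k - P + 1 = 0 by rewrite {2}P_eq; ring.
have thP_rec : theta P - fpsX * P ^+ k - fpsX * k%:R * P ^+ k' * theta P = 0.
  by rewrite {1}P_eq thetaD theta1 thetaM thetaX /k thetaXn; ring.
apply: (fps_mulIl U0).
rewrite mulrCA (mulrC _ logder_P) logder_P_mul.
apply/eqP; rewrite -subr_eq0; apply/eqP.
transitivity (P * (theta P - fpsX * P ^+ k - fpsX * k%:R * P ^+ k' * theta P)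
  + (P + k%:R * theta P) * (fpsX * P ^+ k - P + 1)).
  by rewrite /k exprS -addn1 natrD; ring.
by rewrite P_rec thP_rec; ring.
Qed.

End LogderP.

Lemma gbinom0 a : gbinom a 0 = 1.
Proof. by rewrite /gbinom big_ord0 fact0 divr1. Qed.

Lemma gbinomS a q : gbinom a q.+1 = gbinom a q * (a - q%:R) / q.+1%:R.
Proof.
rewrite /gbinom big_ord_recr /= factS natrM mulrAC -!mulrA; congr (_ * _).
by rewrite invfM; ring.
Qed.

Lemma coef_fps_binpow0 n s a : fps_binpow n s a 0%N = 1.
Proof. by rewrite /fps_binpow dvdn0 div0n gbinom0 expr0 mulr1. Qed.

Lemma coef_fps_binpow_low n s a l :
  (0 < l)%N -> (l < n)%N -> fps_binpow n s a l = 0.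
Proof.
move=> l_gt0 ltln; rewrite /fps_binpow; case: ifP => // /(dvdn_leq l_gt0).
by rewrite leqNgt ltln.
Qed.

Definition logder_binpow (n : nat) (s a : rat) : fps :=
  fun j => if (0 < j)%N && (n %| j)%N then - (n%:R * a) * s ^+ (j %/ n) else 0.

Lemma coef_logder_binpow_low n s a j : (j < n)%N -> logder_binpow n s a j = 0.
Proof.
move=> ltjn; rewrite /logder_binpow; case: ifP => // /andP [j_gt0 /(dvdn_leq j_gt0)].
by rewrite leqNgt ltjn.
Qed.

Lemma coef_mul_1subCXn (f : fps) s n j :
  (f * (1 - fpsC s * fpsX ^+ n)) j = f j - s * (if (n <= j)%N then f (j - n)%N else 0).
Proof.
have -> : f * (1 - fpsC s * fpsX ^+ n) = f - fpsC s * (fpsX ^+ n * f) by ring.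
by rewrite coef_fpsB coef_fpsCM coef_fpsXnM.
Qed.

Section LogderBinpow.

Variables (n : nat) (s a : rat).
Hypothesis n_gt0 : (0 < n)%N.
Let U : fps := 1 - fpsC s * fpsX ^+ n.

Lemma logder_binpow_mul :
  logder_binpow n s a * U = fpsC (- (n%:R * a * s)) * fpsX ^+ n.
Proof.
apply: funext => j; rewrite coef_mul_1subCXn coef_fpsCM -[fpsX ^+ n]mulr1.
rewrite coef_fpsXnM coef_fps1.
case: (leqP n j) => [lenj|ltjn]; last by rewrite coef_logder_binpow_low // !mulr0 subr0.
rewrite -(subnK lenj) addnK; set t := (j - n)%N.
rewrite /logder_binpow addn_gt0 n_gt0 orbT (dvdn_addl _ (dvdnn n)) /=.
case: (posnP t) => [->|t_gt0].
  by rewrite dvdn0 add0n divnn n_gt0 expr1 /= mulr1 mulr0 subr0 mulNr.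
rewrite /=; case: ifP => dvd_nt; last by rewrite !mulr0 subr0.
by rewrite divnDl // divnn n_gt0 addn1 exprS mulr0; ring.
Qed.

Lemma theta_binpow_mul :
  theta (fps_binpow n s a) * U =
  fpsC (- (n%:R * a * s)) * (fpsX ^+ n * fps_binpow n s a).
Proof.
apply: funext => j; rewrite coef_mul_1subCXn coef_fpsCM coef_fpsXnM /theta.
case: (leqP n j) => [lenj|ltjn]; last first.
  rewrite !mulr0 subr0; case: (posnP j) => [j0|j_gt0]; first by rewrite j0 mul0r.
  by rewrite coef_fps_binpow_low // mulr0.
rewrite -(subnK lenj) addnK; set t := (j - n)%N; rewrite /fps_binpow.
rewrite (dvdn_addl _ (dvdnn n)); case: ifP => [/divnK t_eq|]; last by rewrite !mulr0 subr0.
rewrite divnDr ?dvdnn // divnn n_gt0 addn1 gbinomS; set q := (t %/ n)%N in t_eq *.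
rewrite -t_eq natrD natrM exprS -natr1; field.
by rewrite natr1 pnatr_eq0.
Qed.

Lemma theta_binpow :
  theta (fps_binpow n s a) = fps_binpow n s a * logder_binpow n s a.
Proof.
have U0 : U 0%N != 0.
  by rewrite /U -[_ - _]mul1r coef_mul_1subCXn leqNgt n_gt0 mulr0 subr0 oner_eq0.
apply: (@fps_mulIl U); first exact: U0.
by rewrite !(mulrC U) theta_binpow_mul -[RHS]mulrA logder_binpow_mul; ring.
Qed.

End LogderBinpow.

Section ThetaInfprod.

Variables F G : nat -> fps.
Hypothesis F0 : forall n, F n 0%N = 1.
Hypothesis F_low : forall n l, (0 < l < n)%N -> F n l = 0.
Hypothesis G_low : forall n j, (j < n)%N -> G n j = 0.
Hypothesis theta_F : forall n, (0 < n)%N -> theta (F n) = F n * G n.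

Let Fprod J := \prod_(1 <= n < J.+1) F n.
Let Gsum J := \sum_(1 <= n < J.+1) G n.

Lemma theta_prod J : theta (Fprod J) = Fprod J * Gsum J.
Proof.
elim: J => [|J IH]; first by rewrite /Fprod /Gsum !big_geq // theta1 mulr0.
rewrite /Fprod /Gsum !(big_nat_recr J.+1 1) //= thetaM -/(Fprod J) IH theta_F //.
by rewrite -/(Gsum J); ring.
Qed.

Lemma coef_prod_stable i J : (i <= J)%N -> Fprod J i = Fprod i i.
Proof.
elim: J => [|J IH]; first by rewrite leqn0 => /eqP ->.
rewrite leq_eqVlt => /orP [/eqP -> //|]; rewrite ltnS => leiJ.
rewrite /Fprod (big_nat_recr J.+1 1) //= -/(Fprod J) mulrC coef_fpsM.
rewrite big_ord_recl F0 mul1r subn0 big1 ?addr0 ?IH // => l _.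
by rewrite F_low ?mul0r //= /bump /= add1n ltnS (leq_trans (ltn_ord l) leiJ).
Qed.

Lemma coef_sum_stable N J : (N <= J)%N -> Gsum J N = Gsum N N.
Proof.
elim: J => [|J IH]; first by rewrite leqn0 => /eqP ->.
rewrite leq_eqVlt => /orP [/eqP -> //|]; rewrite ltnS => leNJ.
by rewrite /Gsum (big_nat_recr J.+1 1) //= coef_fpsD -/(Gsum J) IH // G_low ?addr0.
Qed.

Lemma theta_infprod :
  theta (fps_infprod F) = fps_infprod F * (fun N => \sum_(1 <= n < N.+1) G n N).
Proof.
apply: funext => j.
transitivity ((Fprod j * Gsum j) j).
  exact: (congr1 (fun f : fps => f j) (theta_prod j)).
rewrite !coef_fpsM; apply: eq_bigr => i _.
rewrite coef_prod_stable; last by rewrite -ltnS.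
by rewrite coef_sum_stable ?leq_subr // /Gsum coef_fps_sum.
Qed.

End ThetaInfprod.

(** * Moebius inversion *)

Lemma divisors_gt0 d n : (0 < n)%N -> d \in divisors n -> (0 < d)%N.
Proof. by move=> n_gt0; rewrite -dvdn_divisors // => /dvdn_gt0; apply. Qed.

Lemma sum_divisorsE (R : nmodType) N (F : nat -> R) : (0 < N)%N ->
  \sum_(1 <= n < N.+1 | (n %| N)%N) F n = \sum_(d <- divisors N) F d.
Proof.
move=> N_gt0; rewrite -big_filter; apply: perm_big; apply: uniq_perm.
- by rewrite filter_uniq // iota_uniq.
- exact: divisors_uniq.
move=> d; rewrite mem_filter mem_index_iota -dvdn_divisors //.
case dvd_dN: (d %| N)%N => //=; rewrite ltnS (dvdn_leq N_gt0 dvd_dN) andbT.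
exact: dvdn_gt0 dvd_dN.
Qed.

Lemma sum_divisors_dvd (R : nmodType) N d (F : nat -> R) : (0 < N)%N -> (d %| N)%N ->
  \sum_(e <- divisors d) F e = \sum_(e <- divisors N | (e %| d)%N) F e.
Proof.
move=> N_gt0 dvd_dN; have d_gt0 := dvdn_gt0 N_gt0 dvd_dN.
rewrite -[RHS]big_filter; apply: perm_big; apply: uniq_perm.
- exact: divisors_uniq.
- by rewrite filter_uniq // divisors_uniq.
move=> e; rewrite mem_filter -!dvdn_divisors //.
by case dvd_ed: (e %| d)%N; rewrite //= (dvdn_trans dvd_ed dvd_dN).
Qed.

Lemma moebius_sqr_dvd p d : prime p -> (p * p %| d)%N -> moebius d = 0.
Proof.
move=> p_pr dvd_ppd; rewrite /moebius; case: (posnP d) => [->//|d_gt0] /=.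
case: ifP => // /allP /(_ p) logn_eq1.
have dvd_pd : (p %| d)%N by apply: dvdn_trans dvd_ppd; apply: dvdn_mulr.
move: logn_eq1; rewrite mem_primes p_pr d_gt0 dvd_pd => /(_ isT) /eqP logn1.
by move: dvd_ppd; rewrite mulnn pfactor_dvdn // logn1.
Qed.

Lemma moebius_prime_mul p e : prime p -> (0 < e)%N -> ~~ (p %| e)%N ->
  moebius (p * e) = - moebius e.
Proof.
move=> p_pr e_gt0 ndvd_pe; have p_gt0 := prime_gt0 p_pr.
have pe_gt0 : (0 < p * e)%N by rewrite muln_gt0 p_gt0.
have primes_pe : perm_eq (primes (p * e)) (p :: primes e).
  apply: uniq_perm; first exact: primes_uniq.
    by rewrite /= primes_uniq andbT mem_primes (negbTE ndvd_pe) !andbF.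
  by move=> q; rewrite primesM // primes_prime // !inE.
have logn_pe q : q \in primes e -> logn q (p * e) = logn q e.
  rewrite mem_primes => /and3P [q_pr _ dvd_qe].
  rewrite lognM // logn_prime //; case: eqP => // eq_qp.
  by move: ndvd_pe; rewrite -eq_qp dvd_qe.
rewrite /moebius pe_gt0 e_gt0 /= (perm_all _ primes_pe) (perm_size primes_pe) /=.
rewrite lognM // logn_prime // eqxx logn_coprime ?prime_coprime // addn0 /=.
rewrite (eq_in_all (a2 := fun q => logn q e == 1%N)) => [|q /logn_pe /= -> //].
by case: ifP => //; rewrite exprS mulN1r.
Qed.

Lemma perm_divisors_prime p n : prime p -> (0 < n)%N -> (p %| n)%N ->
  perm_eq [seq d <- divisors n | (p %| d) && ~~ (p * p %| d)]%N
          [seq p * e | e <- [seq e <- divisors n | ~~ (p %| e)]]%N.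
Proof.
move=> p_pr n_gt0 dvd_pn; have p_gt0 := prime_gt0 p_pr.
apply: uniq_perm.
- by rewrite filter_uniq // divisors_uniq.
- rewrite map_inj_uniq ?filter_uniq ?divisors_uniq //.
  by move=> x y /eqP; rewrite eqn_pmul2l // => /eqP.
move=> x; rewrite mem_filter -dvdn_divisors //; apply/idP/mapP.
  case/andP => /andP [dvd_px ndvd_ppx] dvd_xn.
  exists (x %/ p)%N; last by rewrite mulnC divnK.
  rewrite mem_filter -dvdn_divisors // (dvdn_trans (dvdn_div dvd_px) dvd_xn) andbT.
  by apply: contra ndvd_ppx => /(dvdn_mul (dvdnn p)); rewrite mulnC divnK.
case=> e; rewrite mem_filter -dvdn_divisors // => /andP [ndvd_pe dvd_en] ->.
by rewrite dvdn_mulr //= dvdn_pmul2l // ndvd_pe Gauss_dvd ?prime_coprime // dvd_pn.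
Qed.

Lemma sum_moebius_divisors n : (0 < n)%N ->
  \sum_(d <- divisors n) moebius d = (n == 1%N)%:Z.
Proof.
move=> n_gt0; have [->|n_neq1] := eqVneq n 1%N; first by rewrite big_seq1.
have {n_neq1} n_gt1 : (1 < n)%N by rewrite ltn_neqAle eq_sym n_neq1.
set p := pdiv n; have p_pr : prime p := pdiv_prime n_gt1.
have dvd_pn : (p %| n)%N := pdiv_dvd n.
rewrite (bigID (fun d => p %| d)%N) /=.
have -> : \sum_(d <- divisors n | (p %| d)%N) moebius d =
    \sum_(d <- [seq d <- divisors n | (p %| d) && ~~ (p * p %| d)]%N) moebius d.
  rewrite big_filter big_mkcond [RHS]big_mkcond /=; apply: eq_bigr => d _.
  by case: (p %| d)%N => //=; case: ifP => // /negbFE /(moebius_sqr_dvd p_pr).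
rewrite (perm_big _ (perm_divisors_prime p_pr n_gt0 dvd_pn)) big_map big_filter.
rewrite big_seq_cond [X in _ + X]big_seq_cond -big_split big1 //= => e /andP [en ndvd_pe].
by rewrite moebius_prime_mul ?addNr // (divisors_gt0 n_gt0 en).
Qed.

Lemma sum_moebius_multiples N e : (0 < N)%N -> (e %| N)%N ->
  \sum_(d <- divisors N | (e %| d)%N) moebius (d %/ e)%N = ((N %/ e)%N == 1%N)%:Z.
Proof.
move=> N_gt0 dvd_eN; have e_gt0 := dvdn_gt0 N_gt0 dvd_eN.
have Ne_gt0 : (0 < N %/ e)%N by rewrite divn_gt0 // dvdn_leq.
have multiples : perm_eq [seq d <- divisors N | (e %| d)%N]
                         [seq (f * e)%N | f <- divisors (N %/ e)].
  apply: uniq_perm.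
  - by rewrite filter_uniq // divisors_uniq.
  - rewrite map_inj_uniq ?divisors_uniq // => x y /eqP.
    by rewrite eqn_pmul2r // => /eqP.
  move=> x; rewrite mem_filter -dvdn_divisors //; apply/idP/mapP.
    case/andP => dvd_ex dvd_xN; exists (x %/ e)%N; last by rewrite divnK.
    by rewrite -dvdn_divisors // -(@dvdn_pmul2r e) // !divnK.
  case=> f; rewrite -dvdn_divisors // => dvd_f ->.
  by rewrite dvdn_mull //= -(divnK dvd_eN) dvdn_pmul2r.
rewrite -big_filter (perm_big _ multiples) big_map.
under eq_bigr do rewrite mulnK //.
exact: sum_moebius_divisors.
Qed.

Lemma moebius_inversion (R : pzRingType) (h : nat -> R) N : (0 < N)%N ->
  \sum_(d <- divisors N) \sum_(e <- divisors d) (moebius (d %/ e)%N)%:~R * h e = h N.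
Proof.
move=> N_gt0.
transitivity (\sum_(d <- divisors N) \sum_(e <- divisors N | (e %| d)%N)
                (moebius (d %/ e)%N)%:~R * h e).
  by apply: eq_big_seq => d dN; apply: sum_divisors_dvd; rewrite // dvdn_divisors.
under eq_bigr do rewrite big_mkcond /=.
rewrite exchange_big /=.
transitivity (\sum_(e <- divisors N) (((N %/ e)%N == 1%N)%:Z)%:~R * h e).
  apply: eq_big_seq => e eN; rewrite -dvdn_divisors // in eN.
  rewrite -(sum_moebius_multiples N_gt0 eN) rmorph_sum mulr_suml [RHS]big_mkcond /=.
  by apply: eq_bigr => d _; case: ifP; rewrite ?mul0r.
rewrite (bigD1_seq N) ?divisors_id ?divisors_uniq //= divnn N_gt0 mulr1z mul1r.
rewrite big1_seq ?addr0 //.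
move=> e /andP [neq_eN]; rewrite -dvdn_divisors // => /divnK eN.
by case: eqP => [Ne1|]; [move: neq_eN; rewrite -eN Ne1 mul1n eqxx | rewrite mulr0z mul0r].
Qed.

Lemma divisor_sum_inj (R : zmodType) (f g : nat -> R) :
  (forall N, (0 < N)%N -> \sum_(d <- divisors N) f d = \sum_(d <- divisors N) g d) ->
  forall n, (0 < n)%N -> f n = g n.
Proof.
move=> eq_fg n; elim/ltn_ind: n => n IH n_gt0.
have := eq_fg n n_gt0; rewrite !(bigD1_seq n) ?divisors_id ?divisors_uniq //=.
rewrite [X in _ + X = _]big_seq_cond [X in _ = _ + X]big_seq_cond.
rewrite (eq_bigr g); first exact: addIr.
move=> d /andP [dn neq_dn]; apply: IH; last exact: divisors_gt0 dn.
by rewrite ltn_neqAle neq_dn dvdn_leq // dvdn_divisors.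
Qed.

Lemma divisor_sum_moebius (R : pzRingType) (f h : nat -> R) :
  (forall N, (0 < N)%N -> \sum_(d <- divisors N) f d = h N) ->
  forall n, (0 < n)%N -> f n = \sum_(d <- divisors n) (moebius (n %/ d)%N)%:~R * h d.
Proof.
move=> sum_f; apply: divisor_sum_inj => N N_gt0.
by rewrite sum_f // moebius_inversion.
Qed.

(** * The factorization of P *)

Definition signed_factor (m : nat) (alpha : nat -> rat) (n : nat) : fps :=
  fps_binpow n ((-1) ^+ (m * n)) (alpha n).

Lemma theta_signed_infprod m alpha :
  theta (fps_infprod (signed_factor m alpha)) = fps_infprod (signed_factor m alpha) *
    (fun N => \sum_(1 <= n < N.+1) logder_binpow n ((-1) ^+ (m * n)) (alpha n) N).
Proof.
apply: theta_infprod => [n|n l /andP []|n j|n n_gt0].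
- exact: coef_fps_binpow0.
- exact: coef_fps_binpow_low.
- exact: coef_logder_binpow_low.
- exact: theta_binpow.
Qed.

Lemma sum_logder_signed m alpha N : (0 < N)%N ->
  \sum_(1 <= n < N.+1) logder_binpow n ((-1) ^+ (m * n)) (alpha n) N =
  (-1) ^+ (m * N + 1) * \sum_(d <- divisors N) d%:R * alpha d.
Proof.
move=> N_gt0; rewrite -sum_divisorsE // mulr_sumr [RHS]big_mkcond /=.
apply: eq_bigr => n _; rewrite /logder_binpow N_gt0 /=.
case: ifP => // dvd_nN; rewrite -exprM -mulnA (mulnC n) divnK // exprD; ring.
Qed.

Lemma signed_infprodP m alpha (P c : fps) : P 0%N = 1 -> theta P = P * c ->
  P = fps_infprod (signed_factor m alpha) <->
  forall N, (0 < N)%N -> \sum_(d <- divisors N) d%:R * alpha d = (-1) ^+ (m * N + 1) * c N.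
Proof.
move=> P0 thetaP.
pose G : fps := fun N => \sum_(1 <= n < N.+1) logder_binpow n ((-1) ^+ (m * n)) (alpha n) N.
have thetaPi := theta_signed_infprod m alpha; rewrite -/G in thetaPi.
split=> [PE N N_gt0|sum_alpha].
  have Gc : G = c.
    apply: (@fps_mulIl P); first by rewrite P0 oner_eq0.
    by rewrite -thetaP {1 2}PE thetaPi -PE.
  by rewrite -Gc /G sum_logder_signed // signrMK.
apply: (theta_logder_inj P0 _ thetaP); first by rewrite /fps_infprod big_geq.
rewrite thetaPi; congr (_ * _); apply: funext => -[|N].
  by rewrite (logder_coef0 P0 thetaP) /G big_geq.
by rewrite /G sum_logder_signed // sum_alpha // signrMK.
Qed.

Theorem mainTheorem1 (m : nat) (hm : (2 <= m)%N) (P : fps)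
  (hP0 : P 0%N = 1)
  (hP : P = fps_add fps_one (fps_z (fps_pow P ((m - 1) ^ 2)%N))) :
  let factorization (alpha : nat -> rat) :=
    P = fps_infprod (fun n => fps_binpow n ((-1) ^+ (m * n)) (alpha n)) in
  (exists alpha : nat -> rat, factorization alpha) /\
  (forall alpha : nat -> rat, factorization alpha ->
     forall n : nat, (0 < n)%N ->
       m%:R * alpha n / n%:R =
       m%:R / (((m - 1) ^ 2 * n ^ 2)%N)%:R *
       \sum_(d <- divisors n)
          (-1) ^+ (m * d + 1) * (moebius (n %/ d))%:~R
          * ('C((m - 1) ^ 2 * d, d))%:R).
Proof.
move=> factorization.
have [k' k_eq] : exists k', ((m - 1) ^ 2)%N = k'.+1.
  by exists ((m - 1) ^ 2).-1; rewrite prednK // expn_gt0 subn_gt0 hm.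
have thetaP : theta P = P * logder_P k'.
  by apply: theta_P => //; rewrite {1}hP fps_zE fps_powE k_eq.
pose h N := (-1) ^+ (m * N + 1) * logder_P k' N.
have alphaP alpha : factorization alpha <->
    forall N, (0 < N)%N -> \sum_(d <- divisors N) d%:R * alpha d = h N.
  exact: (signed_infprodP m alpha hP0 thetaP).
split.
  exists (fun n => (\sum_(d <- divisors n) (moebius (n %/ d)%N)%:~R * h d) / n%:R).
  apply/alphaP => N N_gt0; rewrite -(moebius_inversion h N_gt0).
  apply: eq_big_seq => d dN; rewrite mulrC divfK // pnatr_eq0 -lt0n.
  exact: divisors_gt0 dN.
move=> alpha /alphaP sum_alpha n n_gt0.
have n_neq0 : n%:R != 0 :> rat by rewrite pnatr_eq0 -lt0n.
rewrite -[alpha n](mulKf n_neq0) (divisor_sum_moebius sum_alpha n_gt0) k_eq.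
rewrite (eq_big_seq (fun d => (-1) ^+ (m * d + 1) *
    (moebius (n %/ d))%:~R * ('C(k'.+1 * d, d))%:R / k'.+1%:R)); last first.
  by move=> d dn; rewrite /h /logder_P gtn_eqF ?(divisors_gt0 n_gt0 dn); ring.
rewrite -mulr_suml natrM natrX; field.
by rewrite n_neq0 addrC natr1 pnatr_eq0.
Qed.
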